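(* Let $G$ be a graph with $n$ vertices and $m$ edges, let $0\leq \alpha <\alpha_0(G)$, and let $p$ be the positive inertia index of $A_{\alpha}(G)$. Then $$S_{p}(A_{\alpha}(G))\leq 2\alpha m +\frac{1}{2}\left(2m(1-\alpha)^2+\alpha^2Z_1\right)\sqrt{\frac{n(n-p)}{Z_1}},$$ where $Z_1$ is the first Zagreb index of $G$.
   Context: All graphs are simple and undirected. $A_{\alpha}(G)=\alpha D(G)+(1-\alpha)A(G)$, where $A(G)$ is the adjacency matrix and $D(G)$ the diagonal degree matrix. For a real symmetric matrix $M$ with eigenvalues $\lambda_1(M)\geq\cdots\geq\lambda_n(M)$, $S_k(M)=\sum_{i=1}^k\lambda_i(M)$. $\alpha_0(G)$ denotes the smallest $\alpha$ such that $A_{\alpha}(G)$ is positive semidefinite for all $\alpha_0(G)\leq\alpha\leq 1$. The positive inertia index of $A_\alpha(G)$ is its number of positive eigenvalues. $Z_1=\sum_{v\in V(G)}d_v^2$ is the first Zagreb index. *)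

From HB Require Import structures.
From mathcomp Require Import all_boot all_order all_algebra.
From mathcomp Require Import reals.
Set Implicit Arguments. Unset Strict Implicit. Unset Printing Implicit Defensive.
Import Order.TTheory GRing.Theory Num.Theory.
Local Open Scope ring_scope.

Definition simple_graph (n : nat) (e : rel 'I_n) : Prop :=
  (forall u v, e u v = e v u) /\ (forall v, ~~ e v v).

Definition deg (n : nat) (e : rel 'I_n) (v : 'I_n) : nat := #|[set u | e v u]|.

(* number of edges: unordered pairs {u,v}, counted as u < v *)
Definition nedges (n : nat) (e : rel 'I_n) : nat :=
  #|[set x : 'I_n * 'I_n | (x.1 < x.2)%N && e x.1 x.2]|.

Definition zagreb1 (n : nat) (e : rel 'I_n) : nat := (\sum_(v < n) (deg e v) ^ 2)%N.

Definition adjmx (R : nzRingType) (n : nat) (e : rel 'I_n) : 'M[R]_n :=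
  \matrix_(i, j) (e i j)%:R.

Definition degmx (R : nzRingType) (n : nat) (e : rel 'I_n) : 'M[R]_n :=
  \matrix_(i, j) (if i == j then (deg e i)%:R else 0).

Definition Aalpha (R : nzRingType) (n : nat) (e : rel 'I_n) (a : R) : 'M[R]_n :=
  a *: @degmx R n e + (1 - a) *: @adjmx R n e.

Definition psd (R : realType) (n : nat) (M : 'M[R]_n) : Prop :=
  forall x : 'cV[R]_n, 0 <= (x^T *m M *m x) 0 0.

(* a0 is alpha_0(G): the smallest a in [0,1] such that A_b(G) is PSD for all a <= b <= 1 *)
Definition psd_from (R : realType) (n : nat) (e : rel 'I_n) (a : R) : Prop :=
  forall b : R, a <= b -> b <= 1 -> psd (@Aalpha R n e b).

Definition is_alpha0 (R : realType) (n : nat) (e : rel 'I_n) (a0 : R) : Prop :=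
  0 <= a0 /\ a0 <= 1 /\ psd_from e a0 /\
  (forall a : R, 0 <= a -> a <= 1 -> psd_from e a -> a0 <= a).

Definition eigen_list (R : realType) (n : nat) (M : 'M[R]_n) (s : seq R) : Prop :=
  size s = n /\ sorted (fun x y : R => y <= x) s /\
  char_poly M = \prod_(x <- s) ('X - x%:P).

Definition Ssum (R : realType) (s : seq R) (k : nat) : R := \sum_(i < k) s`_i.

Definition pos_inertia (R : realType) (s : seq R) : nat := count (fun x => 0 < x) s.

From HB Require Import structures.
From mathcomp Require Import all_boot all_order all_algebra.
From mathcomp Require Import reals.
From mathcomp Require Import ring complex.
Import Order.TTheory GRing.Theory Num.Theory.
Local Open Scope ring_scope.
Set Implicit Arguments. Unset Strict Implicit. Unset Printing Implicit Defensive.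

(* Let M = A_alpha(G), a nonnegative symmetric matrix, with eigenvalues l_i.
   Then sum l_i = tr M = 2 alpha m and sum l_i^2 = tr M^2 = 2m(1-alpha)^2 + alpha^2 Z_1.
   Let N be minus the sum of the n - p nonpositive eigenvalues, and P, Q the sums of
   the squares of the positive and of the nonpositive ones, so that
   S_p = 2 alpha m + N and, by Cauchy-Schwarz, N^2 <= (n - p) Q.  Since M >= 0, its
   spectral radius rho is an eigenvalue (Perron-Frobenius), hence
   Z_1 = |M 1|^2 <= n rho^2 <= n P, and 4 Z_1 Q <= 4 n P Q <= n (P + Q)^2 gives
   N <= (P + Q)/2 * sqrt (n (n - p) / Z_1).  The spectral facts are obtained by
   viewing M as a Hermitian matrix over R[i]. *)

Lemma char_poly_conj (F : fieldType) n (P B : 'M[F]_n) : P \in unitmx ->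
  char_poly (invmx P *m B *m P) = char_poly B.
Proof.
move=> Pu; rewrite /char_poly /char_poly_mx.
have XE : ('X%:M : 'M[{poly F}]_n) = map_mx polyC (invmx P) *m 'X%:M *m map_mx polyC P.
  by rewrite -mulmxA -scalar_mxC mulmxA -map_mxM mulVmx // map_mx1 mul1mx.
rewrite !map_mxM {1}XE -mulmxBl -mulmxBr !det_mulmx mulrC mulrA -det_mulmx -map_mxM.
by rewrite mulmxV // map_mx1 det1 mul1r.
Qed.

Lemma real_seq_max (C : numDomainType) (l : seq C) :
  l != [::] -> all (fun x => x \is Num.real) l ->
  exists2 x, x \in l & forall z, z \in l -> z <= x.
Proof.
elim: l => [//|y l IH] _ /= /andP[ry rl].
have [-> | l_nil] := eqVneq l [::].
  by exists y => [|z]; rewrite ?mem_head // inE => /eqP->.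
have [x xl lex] := IH l_nil rl.
have rx : x \is Num.real by move/allP: rl; apply.
have [yx | xy] := real_leP ry rx.
  by exists x => [|z]; rewrite inE ?xl ?orbT // => /orP[/eqP-> | /lex].
exists y => [|z]; rewrite inE ?eqxx // => /orP[/eqP-> // | /lex zx].
exact: le_trans zx (ltW xy).
Qed.

Section HermitianForms.
Local Open Scope sesquilinear_scope.
Variables (C : numClosedFieldType) (n : nat).
Implicit Types (P : 'M[C]_n) (E x : 'rV[C]_n).

Lemma form_conj_diag P E x :
  (x *m (P^t* *m diag_mx E *m P) *m x^t*) 0 0 =
  \sum_k E 0 k * `|(x *m P^t*) 0 k| ^+ 2.
Proof.
have xP : P *m x^t* = (x *m P^t*)^t* by rewrite trmx_mul map_mxM trmxCK.
rewrite !mulmxA -[_ *m P *m _]mulmxA xP mxE.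
by apply: eq_bigr => k _; rewrite mul_mx_diag !mxE normCK; ring.
Qed.

Lemma form1E x : (x *m x^t*) 0 0 = \sum_k `|x 0 k| ^+ 2.
Proof. by rewrite mxE; apply: eq_bigr => k _; rewrite !mxE normCK. Qed.

Lemma form1_unitary P x : P^t* *m P = 1%:M ->
  (x *m x^t*) 0 0 = \sum_k `|(x *m P^t*) 0 k| ^+ 2.
Proof.
move=> PK; have := form_conj_diag P (const_mx 1) x.
rewrite diag_const_mx mulmx1 PK mulmx1 => ->.
by apply: eq_bigr => k _; rewrite mxE mul1r.
Qed.

Lemma form_conj_diag_le P E x mu : P^t* *m P = 1%:M -> (forall k, E 0 k <= mu) ->
  (x *m (P^t* *m diag_mx E *m P) *m x^t*) 0 0 <= mu * (x *m x^t*) 0 0.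
Proof.
move=> PK Emu; rewrite form_conj_diag (form1_unitary _ PK) mulr_sumr.
by apply: ler_sum => k _; rewrite ler_wpM2r ?exprn_ge0.
Qed.

Section HermitianSpectrum.
Variables (A : 'M[C]_n) (A_herm : A \is hermsymmx).
Let P := spectralmx A.
Let D := spectral_diag A.

Lemma spectral_mulVmx : P^t* *m P = 1%:M.
Proof. by rewrite -invmx_unitary ?spectral_unitarymx // mulVmx ?spectral_unit. Qed.

Lemma spectral_mulmxV : P *m P^t* = 1%:M.
Proof. exact/unitarymxP/spectral_unitarymx. Qed.

Lemma hermitian_spectralE : A = P^t* *m diag_mx D *m P.
Proof.
rewrite -invmx_unitary ?spectral_unitarymx //.
exact/orthomx_spectralP/hermitian_normalmx.
Qed.

Lemma hermitian_sqr_spectralE : A *m A = P^t* *m diag_mx (\row_j D 0 j ^+ 2) *m P.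
Proof.
rewrite {1 2}hermitian_spectralE !mulmxA -[_ *m P *m P^t*]mulmxA spectral_mulmxV.
by rewrite mulmx1 -[_ *m diag_mx D *m diag_mx D]mulmxA mulmx_diag.
Qed.

Lemma hermitian_eigen_perm (t : seq C) : char_poly A = \prod_(x <- t) ('X - x%:P) ->
  perm_eq t [seq D 0 j | j <- enum 'I_n].
Proof.
move=> tE; apply: prod_XsubC_eq; rewrite -tE big_map big_enum /=.
rewrite {1}hermitian_spectralE -invmx_unitary ?spectral_unitarymx //.
rewrite char_poly_conj ?spectral_unit // char_poly_trig ?diag_mx_is_trig //.
by apply: eq_bigr => j _; rewrite mxE eqxx mulr1n.
Qed.

Lemma mxtrace_conj_spectral X : \tr (P^t* *m X *m P) = \tr X.
Proof. by rewrite mxtrace_mulC mulmxA spectral_mulmxV mul1mx. Qed.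

Lemma hermitian_eigen_sum (t : seq C) : char_poly A = \prod_(x <- t) ('X - x%:P) ->
  \sum_(x <- t) x = \tr A.
Proof.
move=> tE; rewrite (perm_big _ (hermitian_eigen_perm tE)) big_map big_enum /=.
by rewrite [in RHS]hermitian_spectralE mxtrace_conj_spectral mxtrace_diag.
Qed.

Lemma hermitian_eigen_sum_sqr (t : seq C) : char_poly A = \prod_(x <- t) ('X - x%:P) ->
  \sum_(x <- t) x ^+ 2 = \tr (A *m A).
Proof.
move=> tE; rewrite (perm_big _ (hermitian_eigen_perm tE)) big_map big_enum /=.
rewrite hermitian_sqr_spectralE mxtrace_conj_spectral mxtrace_diag.
by apply: eq_bigr => j _; rewrite mxE.
Qed.

Hypothesis A_ge0 : forall i j, 0 <= A i j.

Lemma hermitian_ge0_eigen_norm_le mu : (forall j, D 0 j <= mu) ->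
  forall j, `|D 0 j| <= mu.
Proof.
(* For the unit eigenvector v of D 0 j, |v A v*| <= |v| A |v|* since A >= 0,
   and the Rayleigh quotient of the unit vector |v| is at most mu. *)
move=> Dmu j; set v := row j P; set w := map_mx (@Num.norm _ C) v.
have vA : v *m A = D 0 j *: v.
  rewrite /v -row_mul hermitian_spectralE !mulmxA spectral_mulmxV mul1mx mul_diag_mx.
  by apply/rowP => k; rewrite !mxE.
have vv : (v *m v^t*) 0 0 = 1.
  have /matrixP/(_ j j) := spectral_mulmxV; rewrite !mxE eqxx mulr1n => <-.
  by apply: eq_bigr => k _; rewrite !mxE.
have ww : (w *m w^t*) 0 0 = 1.
  by rewrite -vv !form1E; apply: eq_bigr => k _; rewrite mxE normr_id.
have -> : D 0 j = (v *m A *m v^t*) 0 0 by rewrite vA -scalemxAl mxE vv mulr1.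
apply: (@le_trans _ _ ((w *m A *m w^t*) 0 0)).
  rewrite !mxE (le_trans (ler_norm_sum _ _ _)) //.
  apply: ler_sum => k _; rewrite !mxE normrM norm_conjC geC0_conj //.
  apply: ler_wpM2r => //; apply: (le_trans (ler_norm_sum _ _ _)).
  by apply: ler_sum => l _; rewrite !mxE normrM (ger0_norm (A_ge0 _ _)).
by rewrite -[mu]mulr1 -ww {1}hermitian_spectralE form_conj_diag_le // spectral_mulVmx.
Qed.

Lemma hermitian_ge0_colsum_form (x := const_mx 1 : 'rV[C]_n) :
  (x *m A *m A *m x^t*) 0 0 = \sum_j (\sum_i A i j) ^+ 2.
Proof.
have A_adj : A^t* = A by rewrite {2}(eqP A_herm) expr0 scale1r.
have -> : x *m A *m A *m x^t* = (x *m A) *m (x *m A)^t*.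
  by rewrite -mulmxA trmx_mul map_mxM A_adj.
rewrite form1E.
apply: eq_bigr => j _; have colE : (x *m A) 0 j = \sum_i A i j.
  by rewrite mxE; apply: eq_bigr => i _; rewrite mxE mul1r.
by rewrite colE ger0_norm ?sumr_ge0.
Qed.

Lemma hermitian_ge0_colsum_bound (t : seq C) :
  char_poly A = \prod_(x <- t) ('X - x%:P) -> (0 < n)%N ->
  exists2 mu, mu \in t & 0 <= mu /\ \sum_j (\sum_i A i j) ^+ 2 <= n%:R * mu ^+ 2.
Proof.
move=> tE n_gt0; set sD := [seq D 0 j | j <- enum 'I_n].
have [mu mu_eig Dmu] : exists2 mu, mu \in sD & forall j, D 0 j <= mu.
  have [||mu mu_in mu_max] := @real_seq_max _ sD.
  - by rewrite -size_eq0 size_map size_enum_ord -lt0n.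
  - by apply/allP => _ /mapP[j _ ->]; apply/mxOverP/hermitian_spectral_diag_real.
  by exists mu => // j; apply/mu_max/map_f; rewrite mem_enum.
have Dnorm := hermitian_ge0_eigen_norm_le Dmu.
have mu_ge0 : 0 <= mu.
  by have [j _ _] := mapP mu_eig; rewrite (le_trans (normr_ge0 _) (Dnorm j)).
exists mu; first by rewrite (perm_mem (hermitian_eigen_perm tE)).
split=> //; set x := const_mx 1 : 'rV[C]_n.
have <- : (x *m x^t*) 0 0 = n%:R.
  rewrite form1E (eq_bigr (fun=> 1)) ?sumr_const ?card_ord // => k _.
  by rewrite mxE normr1 expr1n.
rewrite -hermitian_ge0_colsum_form mulrC -[x *m A *m A]mulmxA hermitian_sqr_spectralE.
rewrite form_conj_diag_le ?spectral_mulVmx // => j.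
rewrite mxE -real_normK ?(mxOverP (hermitian_spectral_diag_real A_herm)) //.
by rewrite !expr2 ler_pM.
Qed.

End HermitianSpectrum.
End HermitianForms.

Lemma mxtrace_map (R S : pzSemiRingType) (f : {additive R -> S}) n (A : 'M[R]_n) :
  \tr (map_mx f A) = f (\tr A).
Proof. by rewrite /mxtrace raddf_sum; apply: eq_bigr => i _; rewrite mxE. Qed.

Section RealSymmetric.
Local Open Scope complex_scope.
Variables (R : rcfType) (n : nat) (M : 'M[R]_n) (s : seq R).
Hypotheses (M_sym : M^T = M) (sE : char_poly M = \prod_(x <- s) ('X - x%:P)).
Let Mc := map_mx (real_complex R) M.

Let Mc_herm : Mc \is hermsymmx.
Proof.
rewrite is_hermitianmxE expr0 scale1r; apply/eqP/matrixP => i j.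
by rewrite !mxE -{2}M_sym mxE; exact/esym/conjc_real.
Qed.

Let McE : char_poly Mc = \prod_(x <- map (real_complex R) s) ('X - x%:P).
Proof.
rewrite -map_char_poly sE rmorph_prod big_map.
by apply: eq_bigr => x _; apply: map_polyXsubC.
Qed.

Lemma symmetric_eigen_sum : \sum_(x <- s) x = \tr M.
Proof.
apply: (@complexI R); rewrite -mxtrace_map -(hermitian_eigen_sum Mc_herm McE).
by rewrite rmorph_sum big_map.
Qed.

Lemma symmetric_eigen_sum_sqr : \sum_(x <- s) x ^+ 2 = \tr (M *m M).
Proof.
apply: (@complexI R); rewrite -mxtrace_map map_mxM.
rewrite -(hermitian_eigen_sum_sqr Mc_herm McE) rmorph_sum big_map.
by apply: eq_bigr => x _; rewrite rmorphXn.
Qed.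

Lemma symmetric_ge0_colsum_bound : (forall i j, 0 <= M i j) -> (0 < n)%N ->
  exists2 mu, mu \in s & 0 <= mu /\ \sum_j (\sum_i M i j) ^+ 2 <= n%:R * mu ^+ 2.
Proof.
move=> M_ge0 n_gt0.
have Mc_ge0 i j : 0 <= Mc i j by rewrite mxE ler0c.
have [_ /mapP[mu mu_s ->] [mu_ge0 colsum_le]] :=
  hermitian_ge0_colsum_bound Mc_herm Mc_ge0 McE n_gt0.
exists mu => //; split; first by rewrite -ler0c.
have colsumE : (\sum_j (\sum_i M i j) ^+ 2)%:C = \sum_j (\sum_i Mc i j) ^+ 2.
  rewrite rmorph_sum; apply: eq_bigr => j _; rewrite rmorphXn rmorph_sum.
  by congr (_ ^+ 2); apply: eq_bigr => i _; rewrite mxE.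
by rewrite -lecR colsumE rmorphM rmorphXn rmorph_nat.
Qed.

End RealSymmetric.

Lemma Ssum_pos_inertia (R : realType) (s : seq R) : sorted (fun x y => y <= x) s ->
  Ssum s (pos_inertia s) = \sum_(x <- s | 0 < x) x.
Proof.
rewrite /Ssum /pos_inertia; elim: s => [|x s IH] /= s_sorted.
  by rewrite big_ord0 big_nil.
rewrite big_cons; case: ifP => x_pos.
  by rewrite add1n big_ord_recl IH // (path_sorted s_sorted).
have /allP s_le_x := order_path_min (rev_trans le_trans) s_sorted.
have s_npos : {in s, forall y, (0 < y) = false}.
  move=> y /s_le_x y_le_x; apply/negbTE.
  by rewrite -leNgt (le_trans y_le_x) // leNgt x_pos.
rewrite (eq_in_count s_npos) count_pred0 big_ord0 big1_seq // => y /andP[y_pos /s_npos].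
by rewrite y_pos.
Qed.

Lemma sqr_sum_le_size_mul_sum_sqr (R : realDomainType) (l : seq R) :
  (\sum_(x <- l) x) ^+ 2 <= (size l)%:R * \sum_(x <- l) x ^+ 2.
Proof.
have [-> | l_nil] := eqVneq l [::]; first by rewrite !big_nil expr0n mul0r.
set k := (size l)%:R; set S := \sum_(x <- l) x; set Q := \sum_(x <- l) x ^+ 2.
have k_gt0 : 0 < k by rewrite ltr0n lt0n size_eq0.
have dev_sum : \sum_(x <- l) (k * x - S) ^+ 2 = k * (k * Q - S ^+ 2).
  rewrite (eq_bigr (fun x => k ^+ 2 * x ^+ 2 - 2 * k * S * x + S ^+ 2)) => [|x _];
    last by ring.
  rewrite big_split sumrB /= -!mulr_sumr big_const_seq count_predT iter_addr_0.
  by rewrite -mulr_natr -/k -/S -/Q; ring.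
have : 0 <= k * (k * Q - S ^+ 2) by rewrite -dev_sum sumr_ge0 // => x _; apply: sqr_ge0.
by rewrite pmulr_rge0 // subr_ge0.
Qed.

Lemma le_mul_sqrt (R : rcfType) (N c y : R) : 0 <= c -> 0 <= y ->
  N ^+ 2 <= c ^+ 2 * y -> N <= c * Num.sqrt y.
Proof.
move=> c_ge0 y_ge0 N2_le; apply: le_trans (ler_norm N) _.
rewrite -sqrtr_sqr -(ger0_norm c_ge0) -sqrtr_sqr -sqrtrM ?sqr_ge0 //.
by rewrite ler_sqrt // mulr_ge0 ?sqr_ge0.
Qed.

Lemma le_half_mul_sqrt (R : rcfType) (N P Q Z k n : R) :
  0 <= P -> 0 <= Q -> 0 < Z -> 0 <= k -> N ^+ 2 <= k * Q -> Z <= n * P ->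
  N <= 2^-1 * (P + Q) * Num.sqrt (n * k / Z).
Proof.
move=> P_ge0 Q_ge0 Z_gt0 k_ge0 N2_le Z_le.
have n_gt0 : 0 < n.
  apply: contraTT (lt_le_trans Z_gt0 Z_le); rewrite -!leNgt => n_le0.
  exact: mulr_le0_ge0.
have key : Q * (4 * Z) <= n * (P + Q) ^+ 2.
  apply: le_trans (ler_wpM2l Q_ge0 (ler_wpM2l (ler0n R 4) Z_le)) _.
  rewrite -subr_ge0 (_ : _ - _ = n * (P - Q) ^+ 2); last by ring.
  by rewrite mulr_ge0 ?sqr_ge0 ?ltW.
apply: le_mul_sqrt; first by rewrite mulr_ge0 ?invr_ge0 ?addr_ge0.
  by rewrite divr_ge0 ?mulr_ge0 ?(ltW n_gt0) ?(ltW Z_gt0).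
have -> : (2^-1 * (P + Q)) ^+ 2 * (n * k / Z) = k * (n * (P + Q) ^+ 2 / (4 * Z)).
  by field; rewrite gt_eqF.
by rewrite (le_trans N2_le) // ler_wpM2l // ler_pdivlMr // mulr_gt0.
Qed.

Lemma sum_pos_part_le (R : rcfType) (s : seq R) (n : nat) (Z : R) : size s = n ->
  0 <= Z -> (Z = 0 -> \sum_(x <- s) x ^+ 2 = 0) ->
  (0 < Z -> exists2 mu, mu \in s & 0 <= mu /\ Z <= n%:R * mu ^+ 2) ->
  \sum_(x <- s | 0 < x) x <= \sum_(x <- s) x + 2^-1 * (\sum_(x <- s) x ^+ 2)
    * Num.sqrt (n%:R * (n - count (fun x => 0 < x) s)%:R / Z).
Proof.
move=> <- Z_ge0 sum2_eq0 Z_le_mu.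
set pos := fun x : R => 0 < x.
set neg := [seq x <- s | ~~ pos x].
set N := - \sum_(x <- neg) x.
set P := \sum_(x <- s | pos x) x ^+ 2.
set Q := \sum_(x <- neg) x ^+ 2.
have sumE : \sum_(x <- s) x = \sum_(x <- s | pos x) x - N.
  by rewrite opprK big_filter [LHS](bigID pos).
have sum2E : \sum_(x <- s) x ^+ 2 = P + Q by rewrite /Q big_filter [LHS](bigID pos).
have P_ge0 : 0 <= P by apply: sumr_ge0 => x _; apply: sqr_ge0.
have Q_ge0 : 0 <= Q by apply: sumr_ge0 => x _; apply: sqr_ge0.
have N2_le : N ^+ 2 <= (size s - count pos s)%:R * Q.
  rewrite -(count_predC pos s) addKn -size_filter sqrrN.
  exact: sqr_sum_le_size_mul_sum_sqr.
rewrite sumE -addrA lerDl addrC subr_ge0 sum2E.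
have [Z0 | Z_neq0] := eqVneq Z 0.
  have Q0 : Q = 0.
    by apply/eqP; rewrite eq_le Q_ge0 andbT -(sum2_eq0 Z0) sum2E lerDr.
  (* the square root degenerates to sqrt 0, as x / 0 = 0 *)
  rewrite Q0 mulr0 in N2_le; rewrite Z0 invr0 mulr0 sqrtr0 mulr0.
  have /eqP : N ^+ 2 = 0 by apply/eqP; rewrite eq_le N2_le sqr_ge0.
  by rewrite sqrf_eq0 => /eqP->.
have Z_gt0 : 0 < Z by rewrite lt_def Z_neq0.
have [mu mu_s [mu_ge0 Z_le]] := Z_le_mu Z_gt0.
have mu2_le : mu ^+ 2 <= P.
  have [-> | mu_neq0] := eqVneq mu 0; first by rewrite expr0n.
  have mu_pos : pos mu by rewrite /pos lt_def mu_neq0.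
  by rewrite /P (big_rem mu) //= mu_pos lerDl sumr_ge0 // => x _; apply: sqr_ge0.
apply: le_half_mul_sqrt N2_le (le_trans Z_le _) => //.
by rewrite ler_wpM2l.
Qed.

Lemma zagreb1_gt0_dim n (e : rel 'I_n) : (0 < zagreb1 e)%N -> (0 < n)%N.
Proof. by case: n e => // e; rewrite /zagreb1 big_ord0. Qed.

Section Graph.
Variables (n : nat) (e : rel 'I_n).
Hypothesis e_simple : simple_graph e.

Lemma degE v : deg e v = (\sum_u e v u)%N.
Proof.
by rewrite /deg -sum1dep_card big_mkcond; apply: eq_bigr => u _; case: (e v u).
Qed.

Lemma nedgesE : nedges e = (\sum_(u : 'I_n) \sum_(v : 'I_n) ((u < v)%N && e u v))%N.
Proof.
rewrite /nedges -sum1dep_card big_mkcond pair_big /=.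
by apply: eq_bigr => -[u v] _; case: (_ && _).
Qed.

Lemma handshake : (\sum_v deg e v)%N = (nedges e).*2.
Proof.
have [e_sym e_irr] := e_simple.
have edge_split v u : e v u = (((v < u)%N && e v u) + ((u < v)%N && e v u))%N :> nat.
  case: (ltngtP v u) => [_ | _ | /val_inj vu] /=; [by case: (e v u) | by case: (e v u) |].
  by rewrite vu (negbTE (e_irr u)).
rewrite (eq_bigr (fun v : 'I_n => \sum_(u : 'I_n) ((v < u)%N && e v u)
                                      + \sum_(u : 'I_n) ((u < v)%N && e v u))%N);
  last by move=> v _; rewrite degE -big_split; apply: eq_bigr => u _; exact: edge_split.
rewrite big_split /= -nedgesE exchange_big /= -addnn; congr (_ + _).
by rewrite nedgesE; apply: eq_bigr => u _; apply: eq_bigr => v _; rewrite e_sym.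
Qed.

Lemma zagreb1_eq0_nedges : zagreb1 e = 0%N -> nedges e = 0%N.
Proof.
move=> Z0; apply/eqP; rewrite -double_eq0 -leqn0 -Z0 -handshake leq_sum // => v _.
by case: (deg e v) => // d; rewrite expnS leq_pmulr.
Qed.

Section Aalpha.
Variables (R : comNzRingType) (a : R).
Let M := Aalpha e a.

Lemma degRE v : (deg e v)%:R = \sum_u (e v u)%:R :> R.
Proof. by rewrite degE natr_sum. Qed.

Lemma AalphaE i j :
  M i j = (if i == j then a * (deg e i)%:R else 0) + (1 - a) * (e i j)%:R.
Proof. by rewrite !mxE; case: (i == j); rewrite ?mulr1n ?mulr0n ?mulr0. Qed.

Lemma Aalpha_sym : M^T = M.
Proof.
have [e_sym _] := e_simple.
by apply/matrixP => i j; rewrite mxE !AalphaE eq_sym e_sym; case: eqP => [->|].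
Qed.

Lemma handshakeR : \sum_v (deg e v)%:R = 2 * (nedges e)%:R :> R.
Proof. by rewrite -natr_sum handshake -mul2n natrM. Qed.

Lemma zagreb1RE : (zagreb1 e)%:R = \sum_v (deg e v)%:R ^+ 2 :> R.
Proof. by rewrite /zagreb1 natr_sum; apply: eq_bigr => v _; rewrite natrX. Qed.

Lemma Aalpha_colsum j : \sum_i M i j = (deg e j)%:R.
Proof.
have [e_sym _] := e_simple.
under eq_bigr do rewrite AalphaE e_sym.
by rewrite big_split /= -big_mkcond big_pred1_eq -mulr_sumr -degRE; ring.
Qed.

Lemma mxtrace_Aalpha : \tr M = 2 * a * (nedges e)%:R.
Proof.
have [_ e_irr] := e_simple.
rewrite /mxtrace (eq_bigr (fun i => a * (deg e i)%:R)) => [|i _].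
  by rewrite -mulr_sumr handshakeR; ring.
by rewrite AalphaE eqxx (negbTE (e_irr i)) mulr0 addr0.
Qed.

Lemma mxtrace_Aalpha_sqr :
  \tr (M *m M) = 2 * (nedges e)%:R * (1 - a) ^+ 2 + a ^+ 2 * (zagreb1 e)%:R.
Proof.
have [e_sym e_irr] := e_simple.
have entry_sqr i j : M i j * M j i =
    (if j == i then a ^+ 2 * (deg e i)%:R ^+ 2 else 0) + (1 - a) ^+ 2 * (e i j)%:R.
  rewrite !AalphaE [e j i]e_sym [i == j]eq_sym; case: eqP => [->|_].
    by rewrite (negbTE (e_irr i)) !mulr0 !addr0 -expr2 exprMn.
  by rewrite !add0r; case: (e i j); rewrite ?mulr1 ?mulr0 //; ring.
rewrite /mxtrace
  (eq_bigr (fun i => a ^+ 2 * (deg e i)%:R ^+ 2 + (1 - a) ^+ 2 * (deg e i)%:R)).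
  by rewrite big_split /= -!mulr_sumr handshakeR zagreb1RE; ring.
move=> i _; rewrite mxE (eq_bigr _ (fun j _ => entry_sqr i j)).
by rewrite big_split /= -big_mkcond big_pred1_eq -mulr_sumr degRE.
Qed.

End Aalpha.

Lemma Aalpha_ge0 (R : numDomainType) (a : R) : 0 <= a -> a <= 1 ->
  forall i j, 0 <= Aalpha e a i j.
Proof.
move=> a_ge0 a_le1 i j; rewrite AalphaE addr_ge0 ?mulr_ge0 ?subr_ge0 //.
by case: (i == j); rewrite ?mulr_ge0.
Qed.

End Graph.

Theorem theorem3p4 (R : realType) (n : nat) (e : rel 'I_n) (a a0 : R) (s : seq R) :
  simple_graph e ->
  is_alpha0 e a0 ->
  0 <= a -> a < a0 ->
  eigen_list (@Aalpha R n e a) s ->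
  let m := (nedges e)%:R : R in
  let Z1 := (zagreb1 e)%:R : R in
  let p := pos_inertia s in
  Ssum s p <= 2 * a * m
    + 2^-1 * (2 * m * (1 - a) ^+ 2 + a ^+ 2 * Z1)
      * Num.sqrt (n%:R * (n - p)%:R / Z1).
Proof.
move=> e_simple [_ [a0_le1 _]] a_ge0 a_lt_a0 [s_size [s_sorted sE]]; cbv zeta.
(* a < alpha_0 is only used through a <= 1: the bound holds for all 0 <= a <= 1. *)
have a_le1 : a <= 1 := le_trans (ltW a_lt_a0) a0_le1.
have M_sym := Aalpha_sym e_simple a.
rewrite Ssum_pos_inertia // -(mxtrace_Aalpha e_simple) -(symmetric_eigen_sum M_sym sE).
rewrite -(mxtrace_Aalpha_sqr e_simple) -(symmetric_eigen_sum_sqr M_sym sE).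
apply: (sum_pos_part_le s_size) => [|Z1_eq0|Z1_gt0]; first exact: ler0n.
  have /eqP := Z1_eq0; rewrite pnatr_eq0 => /eqP Z0.
  rewrite (symmetric_eigen_sum_sqr M_sym sE) mxtrace_Aalpha_sqr //.
  by rewrite (zagreb1_eq0_nedges e_simple Z0) Z0 !mulr0 mul0r addr0.
have n_gt0 : (0 < n)%N by move: Z1_gt0; rewrite ltr0n => /zagreb1_gt0_dim.
have [mu mu_s [mu_ge0 colsum_le]] :=
  symmetric_ge0_colsum_bound M_sym sE (Aalpha_ge0 e a_ge0 a_le1) n_gt0.
exists mu => //; split => //.
rewrite zagreb1RE; under eq_bigr do rewrite -(Aalpha_colsum e_simple a).
exact: colsum_le.
Qed.
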